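(* Let $p,q,n$ be positive integers, $\boldsymbol\Lambda$ a real $p\times q$ matrix, $\boldsymbol\Gamma$ a real $p\times p$ matrix with $\boldsymbol\Gamma\boldsymbol\Gamma'=\mathbf I_p-\boldsymbol\Lambda\boldsymbol\Lambda'$, $\mathbf Y,\hat{\mathbf Y}$ real $q\times n$ matrices and $\hat{\mathbf W}$ a real $p\times n$ matrix. For $t\in(0,1)$ set $\mathbf Y(t)=\sqrt t\,\mathbf Y+\sqrt{1-t}\,\hat{\mathbf Y}$, $\mathbf X(t)=\boldsymbol\Lambda\mathbf Y(t)+\boldsymbol\Gamma\hat{\mathbf W}$, and assume $\mathbf X(t)\mathbf X(t)'$ and $\mathbf Y(t)\mathbf Y(t)'$ are invertible. Let $\mathbf Q(t)=(\mathbf X(t)\mathbf X(t)')^{-1}\mathbf X(t)$, $\mathbf U(t)=(\mathbf Y(t)\mathbf Y(t)')^{-1}\mathbf Y(t)$, $\mathbf P_{x(t)}=\mathbf X(t)'\mathbf Q(t)$, $\mathbf P_{y(t)}=\mathbf Y(t)'\mathbf U(t)$, $\mathbf H(t)=\mathbf P_{x(t)}+\mathbf P_{y(t)}$, and for $z\in\mathbb C^+$ let $G=(\mathbf H(t)-z)^{-1}$. For $j\in\{1,\dots,q\}$, $i\in\{1,\dots,n\}$ define $$\Psi^1_{ji}=[\boldsymbol\Lambda'\mathbf Q(t)G^2(\mathbf I-\mathbf P_{x(t)})]_{ji},\qquad \Psi^2_{ji}=[\mathbf U(t)G^2(\mathbf I-\mathbf P_{y(t)})]_{ji},$$ viewed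 as functions of the entries of $\mathbf Y$ and $\hat{\mathbf Y}$. Then for $l=1,2$, $$\frac{1}{\sqrt{1-t}}\frac{\partial\Psi^l_{ji}}{\partial\hat Y_{ji}}=\frac{1}{\sqrt t}\frac{\partial\Psi^l_{ji}}{\partial Y_{ji}}.$$
   Context: In the paper this is used with $\mathbf Y$ having i.i.d. (scaled) entries of mean $0$, variance $1$, finite fourth moment, and $\hat{\mathbf Y},\hat{\mathbf W}$ independent with (scaled) standard Gaussian entries; the identity itself is pointwise. $\mathbf A'$ denotes transpose. *)

From HB Require Import structures.
From mathcomp Require Import all_boot all_order all_algebra.
From mathcomp Require Import all_classical all_reals all_analysis.
From mathcomp Require Import complex.
Set Implicit Arguments. Unset Strict Implicit. Unset Printing Implicit Defensive.
Import Order.TTheory GRing.Theory Num.Theory.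
Local Open Scope ring_scope.

Section Model.
Variables (R : realType) (p q n : nat).
Variables (Lam : 'M[R]_(p, q)) (Gam : 'M[R]_p) (What : 'M[R]_(p, n)).
Variables (t : R) (z : R[i]).

Definition mxC m k (A : 'M[R]_(m, k)) : 'M[R[i]]_(m, k) :=
  map_mx (fun x => (x%:C)%C) A.

Definition Yt (Y Yh : 'M[R]_(q, n)) : 'M[R]_(q, n) :=
  Num.sqrt t *: Y + Num.sqrt (1 - t) *: Yh.
Definition Xt (Y Yh : 'M[R]_(q, n)) : 'M[R]_(p, n) :=
  Lam *m Yt Y Yh + Gam *m What.
Definition Qt Y Yh : 'M[R]_(p, n) :=
  invmx (Xt Y Yh *m (Xt Y Yh)^T) *m Xt Y Yh.
Definition Ut Y Yh : 'M[R]_(q, n) :=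
  invmx (Yt Y Yh *m (Yt Y Yh)^T) *m Yt Y Yh.
Definition Px Y Yh : 'M[R]_n := (Xt Y Yh)^T *m Qt Y Yh.
Definition Py Y Yh : 'M[R]_n := (Yt Y Yh)^T *m Ut Y Yh.
Definition Ht Y Yh : 'M[R]_n := Px Y Yh + Py Y Yh.
Definition Gt Y Yh : 'M[R[i]]_n := invmx (mxC (Ht Y Yh) - z%:M).

Definition Psi1 Y Yh (j : 'I_q) (i : 'I_n) : R[i] :=
  (mxC (Lam^T *m Qt Y Yh) *m (Gt Y Yh *m Gt Y Yh) *m mxC (1%:M - Px Y Yh)) j i.
Definition Psi2 Y Yh (j : 'I_q) (i : 'I_n) : R[i] :=
  (mxC (Ut Y Yh) *m (Gt Y Yh *m Gt Y Yh) *m mxC (1%:M - Py Y Yh)) j i.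
End Model.

Definition has_cderiv (R : realType) (f : R -> R[i]) (x : R) (d : R[i]) :=
  is_derive x 1 (fun s => complex.Re (f s)) (complex.Re d) /\
  is_derive x 1 (fun s => complex.Im (f s)) (complex.Im d).

(* Psi^l depends on (Y, Yhat) only through Y(t) = sqrt t Y + sqrt (1 - t) Yhat,
   so moving Yhat_ji by s is the same as moving Y_ji by (sqrt (1 - t) / sqrt t) s,
   and the identity is the chain rule.  The substance is that the derivatives
   exist: along a line every entry of Psi^l is built from the entries of Y by
   ring operations and by inverting det (X X'), det (Y Y') and det (H - z), which
   are nonzero at the base point, the last one because H is real symmetric and
   Im z > 0. *)

From HB Require Import structures.
From mathcomp Require Import all_boot all_order all_algebra.
From mathcomp Require Import all_classical all_reals all_analysis.
From mathcomp Require Import complex sesquilinear spectral.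
Import Order.TTheory GRing.Theory Num.Theory.
Import numFieldNormedType.Exports.
Local Open Scope ring_scope.
Set Implicit Arguments. Unset Strict Implicit. Unset Printing Implicit Defensive.

Section LocalFieldClosure.
Variables (T : topologicalType) (x : T) (K : fieldType).

Record local_field_closed (P : (T -> K) -> Prop) : Prop := LocalFieldClosed {
  closed_cst : forall c, P (fun=> c);
  closed_add : forall f g, P f -> P g -> P (fun s => f s + g s);
  closed_mul : forall f g, P f -> P g -> P (fun s => f s * g s);
  closed_inv : forall f, P f -> f x != 0 -> P (fun s => (f s)^-1);
  closed_near : forall f g, P f -> (\forall s \near x, f s = g s) -> P g;
  closed_neq0_near : forall f, P f -> f x != 0 -> \forall s \near x, f s != 0 }.

Variables (P : (T -> K) -> Prop) (HP : local_field_closed P).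

Lemma closed_eq f g : P f -> f =1 g -> P g.
Proof. by move=> Pf /funext <-. Qed.

Lemma closed_big (op : K -> K -> K) (idx : K) (I : Type) (r : seq I) (Q : pred I)
    (F : I -> T -> K) :
  (forall f g, P f -> P g -> P (fun s => op (f s) (g s))) -> (forall i, P (F i)) ->
  P (fun s => \big[op/idx]_(i <- r | Q i) F i s).
Proof.
move=> Pop PF; elim: r => [|a r IH].
  by apply: closed_eq (closed_cst HP idx) _ => s; rewrite big_nil.
case Qa: (Q a); last by apply: closed_eq IH _ => s; rewrite big_cons Qa.
by apply: closed_eq (Pop _ _ (PF a) IH) _ => s; rewrite big_cons Qa.
Qed.

Definition entrywise m n (A : T -> 'M[K]_(m, n)) := forall i j, P (fun s => A s i j).

Lemma entrywise_cst m n (C : 'M[K]_(m, n)) : entrywise (fun=> C).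
Proof. by move=> i j; apply: closed_cst. Qed.

Lemma entrywise_add m n (A B : T -> 'M[K]_(m, n)) :
  entrywise A -> entrywise B -> entrywise (fun s => A s + B s).
Proof.
move=> PA PB i j; apply: closed_eq (closed_add HP (PA i j) (PB i j)) _ => s.
by rewrite mxE.
Qed.

Lemma entrywise_scale m n (c : K) (A : T -> 'M[K]_(m, n)) :
  entrywise A -> entrywise (fun s => c *: A s).
Proof.
move=> PA i j; apply: closed_eq (closed_mul HP (closed_cst HP c) (PA i j)) _ => s.
by rewrite mxE.
Qed.

Lemma entrywise_sub m n (A B : T -> 'M[K]_(m, n)) :
  entrywise A -> entrywise B -> entrywise (fun s => A s - B s).
Proof.
move=> PA PB i j.
have PNB := closed_mul HP (closed_cst HP (-1)) (PB i j).
by apply: closed_eq (closed_add HP (PA i j) PNB) _ => s; rewrite !mxE mulN1r.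
Qed.

Lemma entrywise_tr m n (A : T -> 'M[K]_(m, n)) :
  entrywise A -> entrywise (fun s => (A s)^T).
Proof. by move=> PA i j; apply: closed_eq (PA j i) _ => s; rewrite mxE. Qed.

Lemma entrywise_mul m n k (A : T -> 'M[K]_(m, n)) (B : T -> 'M[K]_(n, k)) :
  entrywise A -> entrywise B -> entrywise (fun s => A s *m B s).
Proof.
move=> PA PB i j; have := closed_big 0 (index_enum 'I_n) xpredT (closed_add HP).
move=> /(_ (fun l s => A s i l * B s l j)) Psum.
by apply: closed_eq (Psum _) _ => [l|s]; [apply: (closed_mul HP) | rewrite mxE].
Qed.

Lemma closed_det n (A : T -> 'M[K]_n) : entrywise A -> P (fun s => \det (A s)).
Proof.
move=> PA; apply: (closed_big _ _ _ (closed_add HP)) => sg.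
apply: (closed_mul HP); first exact: (closed_cst HP).
by apply: (closed_big _ _ _ (closed_mul HP)) => l; apply: PA.
Qed.

Lemma entrywise_adj n (A : T -> 'M[K]_n) : entrywise A -> entrywise (fun s => \adj (A s)).
Proof.
move=> PA i j; have Pminor : P (fun s => \det (row' j (col' i (A s)))).
  apply: closed_det => a b.
  by apply: closed_eq (PA (lift j a) (lift i b)) _ => s; rewrite !mxE.
apply: closed_eq (closed_mul HP (closed_cst HP ((-1) ^+ (j + i))) Pminor) _ => s.
by rewrite [RHS]mxE.
Qed.

(* [invmx] coincides with [\adj / \det] only where the determinant is a unit,
   which is why the closure properties are local at [x]. *)
Lemma entrywise_inv n (A : T -> 'M[K]_n) :
  entrywise A -> A x \in unitmx -> entrywise (fun s => invmx (A s)).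
Proof.
move=> PA Ax_unit i j; have Pdet := closed_det PA.
have det_neq0 : \det (A x) != 0 by rewrite -unitfE -unitmxE.
have Pcofactor := closed_mul HP (closed_inv HP Pdet det_neq0) (entrywise_adj PA i j).
apply: (closed_near HP Pcofactor); apply: filterS (closed_neq0_near HP Pdet det_neq0).
by move=> s det_s; rewrite /invmx unitmxE unitfE det_s [RHS]mxE.
Qed.

End LocalFieldClosure.

Section DerivableClosure.
Variables (R : realType) (x : R).
Local Notation Re := (@complex.Re R).
Local Notation Im := (@complex.Im R).

Lemma derivable_local_field_closed :
  local_field_closed x (fun f : R -> R => derivable f x 1).
Proof.
split=> [c|f g|f g|f|f g|f df fx_neq0].
- exact: derivable_cst.
- by move=> df dg; exact: derivableD df dg.
- by move=> df dg; exact: derivableM df dg.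
- by move=> df fx_neq0; apply: derivableV.
- by move=> df fg; apply: near_eq_derivable fg df.
have f_cont : {for x, continuous f} by apply/differentiable_continuous/derivable1_diffP.
exact: cvgr_neq0 f_cont fx_neq0.
Qed.

Definition cderivable (f : R -> R[i]) :=
  derivable (fun s => Re (f s)) x 1 /\ derivable (fun s => Im (f s)) x 1.

Lemma cderivable_local_field_closed : local_field_closed x cderivable.
Proof.
have [Dcst DD DM DV Dnear Dneq0] := derivable_local_field_closed.
have DN (f : R -> R) : derivable f x 1 -> derivable (fun s => - f s) x 1.
  by move=> /derivableN.
split=> [c|f g [df1 df2] [dg1 dg2]|f g [df1 df2] [dg1 dg2]|f [df1 df2] fx_neq0|
         f g [df1 df2] fg|f [df1 df2] fx_neq0].
- by split; apply: Dcst.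
- split.
    have -> : (fun s => Re (f s + g s)) = (fun s => Re (f s) + Re (g s)).
      by apply/funext => s; case: (f s); case: (g s).
    exact: DD.
  have -> : (fun s => Im (f s + g s)) = (fun s => Im (f s) + Im (g s)).
    by apply/funext => s; case: (f s); case: (g s).
  exact: DD.
- split.
    have -> : (fun s => Re (f s * g s)) =
              (fun s => Re (f s) * Re (g s) + - (Im (f s) * Im (g s))).
      by apply/funext => s; case: (f s); case: (g s).
    by apply: DD; [apply: DM | apply: DN; apply: DM].
  have -> : (fun s => Im (f s * g s)) =
            (fun s => Re (f s) * Im (g s) + Im (f s) * Re (g s)).
    by apply/funext => s; case: (f s) => ? ?; case: (g s) => ? ? /=; rewrite addrC.
  by apply: DD; apply: DM.
- pose normf s := Re (f s) * Re (f s) + Im (f s) * Im (f s).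
  have dnorm : derivable normf x 1 := DD _ _ (DM _ _ df1 df1) (DM _ _ df2 df2).
  have normfx_neq0 : normf x != 0.
    move: fx_neq0; rewrite /normf -!expr2; case: (f x) => a b /=; apply: contraNneq => /eqP.
    by rewrite paddr_eq0 ?sqr_ge0 // !sqrf_eq0 => /andP[/eqP-> /eqP->].
  have dinv := DV _ dnorm normfx_neq0.
  split.
    have -> : (fun s => Re (f s)^-1) = (fun s => Re (f s) * (normf s)^-1).
      by apply/funext => s; rewrite /normf; case: (f s).
    exact: DM _ _ df1 dinv.
  have -> : (fun s => Im (f s)^-1) = (fun s => - Im (f s) * (normf s)^-1).
    by apply/funext => s; rewrite /normf; case: (f s) => ? ? /=; rewrite mulNr.
  exact: DM _ _ (DN _ df2) dinv.
- by split; [apply: Dnear df1 _ | apply: Dnear df2 _]; apply: filterS fg => s ->.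
have [re0|re_neq0] := eqVneq (Re (f x)) 0; last first.
  by apply: filterS (Dneq0 _ df1 re_neq0) => s; apply: contraNneq => ->.
have im_neq0 : Im (f x) != 0.
  move: fx_neq0 re0; case: (f x) => a b /= ab_neq0 a0.
  by apply: contraNneq ab_neq0 => b0; rewrite a0 b0.
by apply: filterS (Dneq0 _ df2 im_neq0) => s; apply: contraNneq => ->.
Qed.

Lemma cderivable_real (f : R -> R) : derivable f x 1 -> cderivable (fun s => (f s)%:C%C).
Proof. by split=> //; apply: derivable_cst. Qed.

Lemma entrywise_cderivable_mxC m k (A : R -> 'M[R]_(m, k)) :
  entrywise (fun f : R -> R => derivable f x 1) A ->
  entrywise cderivable (fun s => mxC (A s)).
Proof.
move=> dA a b; have -> : (fun s => mxC (A s) a b) = (fun s => (A s a b)%:C%C).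
  by apply/funext => s; rewrite mxE.
exact: cderivable_real.
Qed.

Lemma entrywise_derivable_line m k (A D : 'M[R]_(m, k)) :
  entrywise (fun f : R -> R => derivable f x 1) (fun s => A + s *: D).
Proof.
move=> a b; have -> : (fun s => (A + s *: D) a b) = (fun s => A a b + s * D a b).
  by apply/funext => s; rewrite !mxE.
apply: derivableD; first exact: derivable_cst.
by apply: derivableM; [apply: derivable_id | apply: derivable_cst].
Qed.

End DerivableClosure.

Lemma is_derive_scale_arg (R : realType) (g : R -> R) (c x d : R) :
  is_derive (c * x) 1 g d -> is_derive x 1 (fun s => g (c * s)) (c * d).
Proof.
move=> gd; have dcs : derivable ( *%R c) x 1.
  by apply: derivableM; [apply: derivable_cst | apply: derivable_id].
have dg : derivable g (c * x) 1 by [].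
apply: DeriveDef.
  by apply/derivable1_diffP/differentiable_comp; apply/derivable1_diffP.
rewrite -derive1E (derive1_comp dcs dg) !derive1E derive_val mulrC.
by rewrite (deriveMl c (@derivable_id _ R^o x 1)) derive_id mulr1.
Qed.

Lemma has_cderiv_scale_arg (R : realType) (f : R -> R[i]) (c x : R) (d : R[i]) :
  has_cderiv f (c * x) d -> has_cderiv (fun s => f (c * s)) x (c%:C%C * d).
Proof.
rewrite -complexr0; case: d => a b [dre dim].
by split; rewrite /= mul0r ?subr0 ?addr0; apply: is_derive_scale_arg.
Qed.

Lemma cderivable_has_cderiv (R : realType) (f : R -> R[i]) (x : R) :
  cderivable x f -> exists d, has_cderiv f x d.
Proof.
case=> dre dim.
exists (Complex ('D_1 (fun s => complex.Re (f s)) x) ('D_1 (fun s => complex.Im (f s)) x)).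
by split; apply: derivableP.
Qed.

Lemma trmx_gram_proj (K : comUnitRingType) m n (A : 'M[K]_(m, n)) :
  (A^T *m (invmx (A *m A^T) *m A))^T = A^T *m (invmx (A *m A^T) *m A).
Proof. by rewrite !trmx_mul trmxK trmx_inv trmx_mul trmxK mulmxA. Qed.

(* A left null vector [v] of [H - z] gives [z <v, v> = <v H, v> = <v, v H> = z^* <v, v>]. *)
Lemma sym_sub_nonreal_unitmx (R : realType) n (H : 'M[R]_n) (z : R[i]) :
  H^T = H -> 0 < complex.Im z -> mxC H - z%:M \in unitmx.
Proof.
move=> H_sym Imz_gt0; apply: contraT; rewrite unitmxE unitfE negbK => /det0P[v v_neq0].
rewrite mulmxBr mul_mx_scalar => /eqP; rewrite subr_eq0 => /eqP vH.
pose vv := (v *m map_mx conjc v^T) 0 0.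
have HC : map_mx conjc (mxC H)^T = mxC H.
  by apply/matrixP => a b; rewrite !mxE conjc_real -[in RHS]H_sym mxE.
have vv_neq0 : vv != 0 by rewrite /vv -dotmxE lt0r_neq0 ?dotmx_is_dotmx.
have : z * vv = conjc z * vv.
  transitivity ((v *m mxC H *m map_mx conjc v^T) 0 0).
    by rewrite vH -scalemxAl mxE.
  by rewrite -mulmxA -{1}HC -map_mxM -trmx_mul vH linearZ /= map_mxZ -scalemxAr mxE.
move/(mulIf vv_neq0); clear vH; case: z Imz_gt0 => a b /= b_gt0 [] /eqP.
by rewrite -subr_eq0 opprK -mulr2n mulrn_eq0 /= gt_eqF.
Qed.

Section DerivableAlongLine.
Variables (R : realType) (p q n : nat).
Variables (Lam : 'M[R]_(p, q)) (Gam : 'M[R]_p) (What : 'M[R]_(p, n)).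
Variables (t : R) (z : R[i]) (Y Yh D : 'M[R]_(q, n)).
Hypothesis hX : Xt Lam Gam What t Y Yh *m (Xt Lam Gam What t Y Yh)^T \in unitmx.
Hypothesis hY : Yt t Y Yh *m (Yt t Y Yh)^T \in unitmx.
Hypothesis hz : 0 < complex.Im z.

Local Notation Dmx := (entrywise (fun f : R -> R => derivable f 0 1)).
Local Notation CDmx := (entrywise (cderivable 0)).
Let Dclosed := derivable_local_field_closed (0 : R).
Let CDclosed := cderivable_local_field_closed (0 : R).

Lemma derivable_Yt : Dmx (fun s => Yt t (Y + s *: D) Yh).
Proof.
apply: (entrywise_add Dclosed); last exact: (entrywise_cst Dclosed).
by apply: (entrywise_scale Dclosed); apply: entrywise_derivable_line.
Qed.

Lemma derivable_Xt : Dmx (fun s => Xt Lam Gam What t (Y + s *: D) Yh).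
Proof.
apply: (entrywise_add Dclosed); last exact: (entrywise_cst Dclosed).
by apply: (entrywise_mul Dclosed); [apply: (entrywise_cst Dclosed) | apply: derivable_Yt].
Qed.

Lemma derivable_Qt : Dmx (fun s => Qt Lam Gam What t (Y + s *: D) Yh).
Proof.
apply: (entrywise_mul Dclosed); last exact: derivable_Xt.
apply: (entrywise_inv Dclosed); last by rewrite scale0r addr0.
exact: (entrywise_mul Dclosed derivable_Xt (entrywise_tr derivable_Xt)).
Qed.

Lemma derivable_Ut : Dmx (fun s => Ut t (Y + s *: D) Yh).
Proof.
apply: (entrywise_mul Dclosed); last exact: derivable_Yt.
apply: (entrywise_inv Dclosed); last by rewrite scale0r addr0.
exact: (entrywise_mul Dclosed derivable_Yt (entrywise_tr derivable_Yt)).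
Qed.

Lemma derivable_Px : Dmx (fun s => Px Lam Gam What t (Y + s *: D) Yh).
Proof.
exact: (entrywise_mul Dclosed (entrywise_tr derivable_Xt) derivable_Qt).
Qed.

Lemma derivable_Py : Dmx (fun s => Py t (Y + s *: D) Yh).
Proof.
exact: (entrywise_mul Dclosed (entrywise_tr derivable_Yt) derivable_Ut).
Qed.

Lemma cderivable_Gt : CDmx (fun s => Gt Lam Gam What t z (Y + s *: D) Yh).
Proof.
apply: (entrywise_inv CDclosed).
  apply: (entrywise_sub CDclosed); last exact: (entrywise_cst CDclosed).
  apply: entrywise_cderivable_mxC.
  by apply: (entrywise_add Dclosed); [apply: derivable_Px | apply: derivable_Py].
rewrite scale0r addr0; apply: sym_sub_nonreal_unitmx hz.
by rewrite /Ht /Px /Py /Qt /Ut linearD /= !trmx_gram_proj.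
Qed.

Lemma cderivable_Psi1 j i :
  cderivable 0 (fun s => Psi1 Lam Gam What t z (Y + s *: D) Yh j i).
Proof.
apply: (entrywise_mul CDclosed); first apply: (entrywise_mul CDclosed).
- apply: entrywise_cderivable_mxC.
  by apply: (entrywise_mul Dclosed); [apply: (entrywise_cst Dclosed) | apply: derivable_Qt].
- by apply: (entrywise_mul CDclosed); apply: cderivable_Gt.
apply: entrywise_cderivable_mxC.
by apply: (entrywise_sub Dclosed); [apply: (entrywise_cst Dclosed) | apply: derivable_Px].
Qed.

Lemma cderivable_Psi2 j i :
  cderivable 0 (fun s => Psi2 Lam Gam What t z (Y + s *: D) Yh j i).
Proof.
apply: (entrywise_mul CDclosed); first apply: (entrywise_mul CDclosed).
- by apply: entrywise_cderivable_mxC; apply: derivable_Ut.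
- by apply: (entrywise_mul CDclosed); apply: cderivable_Gt.
apply: entrywise_cderivable_mxC.
by apply: (entrywise_sub Dclosed); [apply: (entrywise_cst Dclosed) | apply: derivable_Py].
Qed.

End DerivableAlongLine.

Section DependenceThroughYt.
Variables (R : realType) (p q n : nat).
Variables (Lam : 'M[R]_(p, q)) (Gam : 'M[R]_p) (What : 'M[R]_(p, n)) (t : R) (z : R[i]).
Variables (A B A' B' : 'M[R]_(q, n)).
Hypothesis eqYt : Yt t A B = Yt t A' B'.

Lemma Psi1_Yt j i : Psi1 Lam Gam What t z A B j i = Psi1 Lam Gam What t z A' B' j i.
Proof. by rewrite /Psi1 /Gt /Ht /Px /Py /Qt /Ut /Xt eqYt. Qed.

Lemma Psi2_Yt j i : Psi2 Lam Gam What t z A B j i = Psi2 Lam Gam What t z A' B' j i.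
Proof. by rewrite /Psi2 /Gt /Ht /Px /Py /Qt /Ut /Xt eqYt. Qed.

End DependenceThroughYt.

Lemma Yt_shift_Yh (R : realType) q n (t : R) (Y Yh D : 'M[R]_(q, n)) (s : R) :
  0 < t ->
  Yt t Y (Yh + s *: D) = Yt t (Y + (Num.sqrt (1 - t) / Num.sqrt t * s) *: D) Yh.
Proof.
move=> t_gt0; rewrite /Yt !scalerDr !scalerA mulrA mulrCA mulfV ?mulr1.
  by rewrite addrAC -addrA.
by rewrite gt_eqF // sqrtr_gt0.
Qed.

Unset Implicit Arguments.

Theorem lemma6p4 (R : realType) (p q n : nat)
  (hp : (0 < p)%N) (hq : (0 < q)%N) (hn : (0 < n)%N)
  (Lam : 'M[R]_(p, q)) (Gam : 'M[R]_p)
  (hGam : Gam *m Gam^T = 1%:M - Lam *m Lam^T)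
  (Y Yh : 'M[R]_(q, n)) (What : 'M[R]_(p, n))
  (t : R) (ht : 0 < t < 1)
  (hX : Xt Lam Gam What t Y Yh *m (Xt Lam Gam What t Y Yh)^T \in unitmx)
  (hY : Yt t Y Yh *m (Yt t Y Yh)^T \in unitmx)
  (z : R[i]) (hz : 0 < complex.Im z)
  (j : 'I_q) (i : 'I_n) :
  (forall Psi : 'M[R]_(q, n) -> 'M[R]_(q, n) -> R[i],
     Psi = (fun A B => Psi1 Lam Gam What t z A B j i) \/
     Psi = (fun A B => Psi2 Lam Gam What t z A B j i) ->
   exists dYh dY : R[i],
     has_cderiv (fun s : R => Psi Y (Yh + s *: delta_mx j i)) 0 dYh /\
     has_cderiv (fun s : R => Psi (Y + s *: delta_mx j i) Yh) 0 dY /\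
     ((Num.sqrt (1 - t))^-1)%:C%C * dYh = ((Num.sqrt t)^-1)%:C%C * dY).
Proof.
move=> Psi Psi_def; case/andP: ht => t_gt0 t_lt1.
set E := delta_mx j i; set c := Num.sqrt (1 - t) / Num.sqrt t.
have Psi_shift s : Psi Y (Yh + s *: E) = Psi (Y + (c * s) *: E) Yh.
  by case: Psi_def => ->; [apply: Psi1_Yt | apply: Psi2_Yt]; apply: Yt_shift_Yh.
have [dY dY_def] : exists d, has_cderiv (fun s => Psi (Y + s *: E) Yh) 0 d.
  apply: cderivable_has_cderiv; case: Psi_def => ->.
    exact: cderivable_Psi1 E hX hY hz j i.
  exact: cderivable_Psi2 E hX hY hz j i.
exists (c%:C%C * dY), dY; split; last split => //.
  rewrite (funext Psi_shift).
  by apply: (@has_cderiv_scale_arg _ (fun u => Psi (Y + u *: E) Yh)); rewrite mulr0.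
rewrite mulrA -rmorphM /c mulrA mulVf ?mul1r //.
by rewrite gt_eqF // sqrtr_gt0 subr_gt0.
Qed.
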